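(* $R(K_4^*,2)=7$.
   Context: For a family $\mathcal{G}$ of graphs, $R(\mathcal{G},k)$ is the smallest $n$ such that every coloring of the edges of $K_n$ with $k$ colors contains a monochromatic subgraph isomorphic to some member of $\mathcal{G}$. $K_4^*$ is the family of graphs consisting of: $K_4$; the graph obtained from $K_4$ minus an edge by attaching a pendant edge at one of its two vertices of degree $2$; and the triangle with a pendant edge attached at each of its three vertices. *)

From Stdlib Require Import List.
From mathcomp Require Import all_boot.
Set Implicit Arguments. Unset Strict Implicit. Unset Printing Implicit Defensive.

(* A small graph pattern: [gv] vertices 0..gv-1, edge list [ge] (pairs of
   vertex indices < gv). *)
Record pattern := Pattern { gv : nat; ge : seq (nat * nat) }.

Definition K4 : pattern :=
  Pattern 4 [:: (0,1); (0,2); (0,3); (1,2); (1,3); (2,3)].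
Definition K4e_pendant : pattern :=
  Pattern 5 [:: (0,1); (0,2); (0,3); (1,2); (1,3); (2,4)].
Definition net : pattern :=
  Pattern 6 [:: (0,1); (0,2); (1,2); (0,3); (1,4); (2,5)].

Definition K4_star : seq pattern := [:: K4; K4e_pendant; net].

(* An edge colouring of K_n with k colours: a symmetric function on pairs of
   vertices (diagonal values irrelevant). *)
Definition edge_coloring (n k : nat) (c : 'I_n -> 'I_n -> 'I_k) : Prop :=
  forall x y : 'I_n, c x y = c y x.

Definition has_mono_copy (n k : nat) (c : 'I_n -> 'I_n -> 'I_k) (H : pattern) : Prop :=
  exists (f : 'I_(gv H) -> 'I_n) (col : 'I_k),
    injective f /\
    forall i j : 'I_(gv H), (val i, val j) \in ge H -> c (f i) (f j) = col.

Definition arrows (n k : nat) (F : seq pattern) : Prop :=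
  forall c : 'I_n -> 'I_n -> 'I_k, edge_coloring c ->
    exists2 H, List.In H F & has_mono_copy c H.

Definition ramsey_is (F : seq pattern) (k r : nat) : Prop :=
  arrows r k F /\ forall n, n < r -> ~ arrows n k F.

From mathcomp Require Import all_boot zify.
Set Implicit Arguments. Unset Strict Implicit. Unset Printing Implicit Defensive.

(* Lower bound: split K_n, n <= 6, into the vertices below 3 and the rest and
   colour an edge by whether it crosses.  The crossing colour is bipartite, so a
   monochromatic triangle lies inside a part of size at most 3; but each graph of
   K_4^* has a triangle with a further edge at one of its vertices, which would
   need a fourth vertex in that part.
   Upper bound: exhaustive search.  A backtracking procedure looks for
   monochromatic embeddings in every 2-colouring of K_7, encoded as 21 bits; by
   colour symmetry the first edge has a fixed colour, and colourings whose
   restriction to K_6 already contains a copy are settled there. *)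

Lemma In_all T (p : pred T) s x : all p s -> List.In x s -> p x.
Proof. by elim: s => //= y s IH /andP [py ps] [<- | /IH]; auto. Qed.

Definition side_coloring n (x y : 'I_n) : 'I_2 := if (x < 3) == (y < 3) then ord0 else ord_max.

Lemma side_coloring_sym n : edge_coloring (@side_coloring n).
Proof. by move=> x y; rewrite /side_coloring eq_sym. Qed.

Lemma side_coloring_pendant_triangle n (x y z w : 'I_n) col : n <= 6 ->
  uniq [:: val x; val y; val z; val w] ->
  side_coloring x y = col -> side_coloring x z = col -> side_coloring y z = col ->
  side_coloring x w = col -> False.
Proof.
rewrite /= !inE !negb_or => n_le /and4P [/and3P [xy xz xw] /andP [yz yw] zw _].
move=> <- /eqP exz /eqP eyz /eqP exw.
move: (ltn_ord x) (ltn_ord y) (ltn_ord z) (ltn_ord w) exz eyz exw; rewrite /side_coloring.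
by case: (x < 3) / idP; case: (y < 3) / idP; case: (z < 3) / idP; case: (w < 3) / idP;
  rewrite //=; lia.
Qed.

Definition has_pendant_triangle (H : pattern) : bool :=
  [&& 3 < gv H, (0, 1) \in ge H, (0, 2) \in ge H, (1, 2) \in ge H & (0, 3) \in ge H].

Lemma side_coloring_no_copy n H : n <= 6 -> has_pendant_triangle H ->
  ~ has_mono_copy (@side_coloring n) H.
Proof.
move=> n_le /and5P [H3 H01 H02 H12 H03] [f [col [f_inj f_col]]].
pose v k (k_lt : k < 4) : 'I_(gv H) := Ordinal (leq_trans k_lt H3).
apply: (side_coloring_pendant_triangle n_le _
  (f_col (v 0 isT) (v 1 isT) H01) (f_col (v 0 isT) (v 2 isT) H02)
  (f_col (v 1 isT) (v 2 isT) H12) (f_col (v 0 isT) (v 3 isT) H03)).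
by rewrite /= !inE !val_eqE !(inj_eq f_inj).
Qed.

Lemma K4_star_pendant_triangle : all has_pendant_triangle K4_star.
Proof. by []. Qed.

Lemma not_arrows_lt7 n : n < 7 -> ~ arrows n 2 K4_star.
Proof.
move=> n_lt /(_ _ (@side_coloring_sym n)) [H HF]; apply: side_coloring_no_copy => //.
exact: In_all K4_star_pendant_triangle HF.
Qed.

Lemma has_mono_copy_recolor n k (c : 'I_n -> 'I_n -> 'I_k) (p : 'I_k -> 'I_k) H :
  involutive p -> has_mono_copy (fun x y => p (c x y)) H -> has_mono_copy c H.
Proof.
move=> pK [f [col [f_inj f_col]]]; exists f, (p col); split => // i j e.
by rewrite -(f_col i j e) pK.
Qed.

Definition nat_coloring n (c : 'I_n.+1 -> 'I_n.+1 -> 'I_2) (i j : nat) : bool :=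
  c (inord i) (inord j) != ord0.

Lemma nat_coloring_rev n (c : 'I_n.+1 -> 'I_n.+1 -> 'I_2) i j :
  nat_coloring (fun x y => rev_ord (c x y)) i j = ~~ nat_coloring c i j.
Proof. by rewrite /nat_coloring; case: (c _ _) => [[|[|//]] ?]. Qed.

Definition oriented (H : pattern) : bool := all (fun e => e.1 < e.2 < gv H) (ge H).

Definition mono_embedding (g : nat -> nat -> bool) (N : nat) (H : pattern) (col : bool)
    (s : seq nat) : Prop :=
  [/\ uniq s, size s = gv H, all (fun v => v < N) s &
      forall e, e \in ge H -> g (nth 0 s e.1) (nth 0 s e.2) = col].

Lemma ord2_neq0 (x : 'I_2) b : (x != ord0) = b -> x = inord b.
Proof. by case: x => [[|[|//]] x_lt] <-; apply/val_inj; rewrite /= inordK. Qed.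

Lemma mono_embedding_copy n (c : 'I_n.+1 -> 'I_n.+1 -> 'I_2) H col s :
  mono_embedding (nat_coloring c) n.+1 H col s -> has_mono_copy c H.
Proof.
move=> [s_uniq s_size s_range s_col].
have nth_lt (i : 'I_(gv H)) : nth 0 s i < n.+1.
  by apply: (allP s_range); rewrite mem_nth // s_size.
exists (fun i => inord (nth 0 s i)), (inord col); split.
  move=> i j /(congr1 val); rewrite /= !inordK ?nth_lt // => /eqP.
  by rewrite nth_uniq ?s_size // => /eqP /val_inj.
by move=> i j /s_col; exact: ord2_neq0.
Qed.

Lemma mono_embedding_transfer g g' N N' H col s : oriented H -> N <= N' ->
  (forall i j, i < N -> j < N -> i != j -> g i j = g' i j) ->
  mono_embedding g N H col s -> mono_embedding g' N' H col s.
Proof.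
move=> /allP H_or NN' gg' [s_uniq s_size s_range s_col]; split => //.
  by apply: sub_all s_range => v v_lt; exact: leq_trans v_lt NN'.
move=> e e_in; have /andP [e_lt e_in_range] := H_or e e_in.
have nth_lt k : k < gv H -> nth 0 s k < N.
  by move=> k_lt; apply: (allP s_range); rewrite mem_nth // s_size.
have e1_lt := ltn_trans e_lt e_in_range.
by rewrite -gg' ?s_col ?nth_lt ?nth_uniq ?s_size ?(ltn_eqF e_lt).
Qed.

(* [has] and [all] with a short-circuiting [if]: [vm_compute] is call by value
   and would evaluate both arguments of [||] and [&&]. *)
Fixpoint lazy_has {T} (a : T -> bool) (s : seq T) : bool :=
  if s is x :: s' then (if a x then true else lazy_has a s') else false.

Fixpoint lazy_all {T} (a : T -> bool) (s : seq T) : bool :=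
  if s is x :: s' then (if a x then lazy_all a s' else false) else true.

Lemma lazy_hasE T (a : T -> bool) s : lazy_has a s = has a s.
Proof. by elim: s => //= x s ->; case: (a x). Qed.

Lemma lazy_allE T (a : T -> bool) s : lazy_all a s = all a s.
Proof. by elim: s => //= x s ->; case: (a x). Qed.

(* Entry [m] of a search plan gives the neighbours of vertex [m] among the
   earlier vertices, and a flag asking its image to exceed that of vertex
   [m - 1]; the flags break symmetries of the pattern and only prune the search. *)
Definition search_plan (H : pattern) (inc : seq bool) : seq (bool * seq nat) :=
  mkseq (fun m => (nth false inc m, [seq e.1 | e <- ge H & e.2 == m])) (gv H).

Fixpoint extendb (g : nat -> nat -> bool) (N : nat) (col : bool)
    (P : seq (bool * seq nat)) (s : seq nat) : bool :=
  if P is (inc, b) :: P' then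
    let lo := if inc then (last 0 s).+1 else 0 in
    lazy_has (fun v =>
      if lazy_all (fun u => u != v) s then
        if lazy_all (fun u => g (nth 0 s u) v == col) b
        then extendb g N col P' (rcons s v) else false
      else false) (iota lo (N - lo))
  else true.

Lemma extendb_sound g N col P s :
  (forall m u, u \in (nth (false, [::]) P m).2 -> u < size s + m) ->
  extendb g N col P s ->
  exists t, [/\ size t = size P, uniq t, all (fun v => (v < N) && (v \notin s)) t &
    forall m u, m < size P -> u \in (nth (false, [::]) P m).2 ->
      g (nth 0 (s ++ t) u) (nth 0 t m) = col].
Proof.
elim: P s => [|[inc b] P IH] s back_lt /=; first by exists [::].
rewrite lazy_hasE => /hasP [v]; rewrite mem_iota => v_range.
have vN : v < N by case: (inc) v_range; lia.
rewrite lazy_allE; case: ifP => // /allP v_new; rewrite lazy_allE.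
case: ifP => // /allP b_col ext.
have {}v_new : v \notin s by apply/negP => /v_new; rewrite eqxx.
have [m u u_in|t [t_size t_uniq t_range t_col]] := IH (rcons s v) _ ext.
  by rewrite size_rcons addSnnS; exact: (back_lt m.+1).
have t_new w : w \in t -> w \notin rcons s v by move/(allP t_range)/andP => [].
exists (v :: t); split => /=.
- by rewrite t_size.
- by rewrite t_uniq andbT; apply/negP => /t_new; rewrite mem_rcons mem_head.
- rewrite vN v_new; apply/allP => w /[dup] /t_new.
  by rewrite mem_rcons in_cons negb_or => /andP [_ ->] /(allP t_range) /andP [->].
- case=> [|m] u /= m_lt u_in; last by rewrite -cat_rcons; exact: t_col.
  have u_lt := back_lt 0 u u_in; rewrite addn0 in u_lt.
  by rewrite nth_cat u_lt; exact/eqP/b_col.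
Qed.

Definition mono_searchb g N H inc col : bool := extendb g N col (search_plan H inc) [::].

Lemma mono_searchb_sound g N H inc col : oriented H -> mono_searchb g N H inc col ->
  exists s, mono_embedding g N H col s.
Proof.
move=> /allP H_or /extendb_sound [m u|s [s_size s_uniq s_range s_col]].
  have [m_lt|m_ge] := ltnP m (gv H); last by rewrite nth_default ?size_mkseq.
  rewrite nth_mkseq // => /mapP [e]; rewrite mem_filter => /andP [/eqP <- /H_or].
  by move=> /andP [e_lt _] ->.
exists s; split => //.
- by rewrite s_size size_mkseq.
- by apply: sub_all s_range => v /andP [].
- move=> e e_in; have /andP [e_lt e_in_range] := H_or e e_in.
  apply: (s_col e.2 e.1); first by rewrite size_mkseq.
  by rewrite nth_mkseq // map_f // mem_filter eqxx.
Qed.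

Definition family_searchb g N (F : seq (pattern * seq bool)) : bool :=
  lazy_has (fun Hi => if mono_searchb g N Hi.1 Hi.2 true then true
                      else mono_searchb g N Hi.1 Hi.2 false) F.

Lemma family_searchb_sound g N F : all (oriented \o fst) F -> family_searchb g N F ->
  exists H col s, List.In H (map fst F) /\ mono_embedding g N H col s.
Proof.
elim: F => //= [[H inc] F IH] /andP [H_or F_or].
have found col : mono_searchb g N H inc col -> exists H' col s,
    (H = H' \/ List.In H' (map fst F)) /\ mono_embedding g N H' col s.
  by move=> /(mono_searchb_sound H_or) [s Hs]; exists H, col, s; split; [left|].
rewrite /family_searchb /=.
case: ifP => [H_found _ | _ /(IH F_or) [H' [col [s [HF Hs]]]]].
  by move: H_found; case: ifP => [/found | _ /found].
by exists H', col, s; split; [right|].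
Qed.

(* Colex numbering of the edges of K_n: the edges of K_m come first, so
   [take 'C(m, 2)] restricts a colouring of K_n to K_m. *)
Definition edge_index (i j : nat) : nat := 'C(maxn i j, 2) + minn i j.

Definition edges (n : nat) : seq (nat * nat) :=
  flatten [seq [seq (i, j) | i <- iota 0 j] | j <- iota 0 n].

Definition coloring_bits (g : nat -> nat -> bool) (n : nat) : seq bool :=
  [seq g e.1 e.2 | e <- edges n].

Definition bits_coloring (l : seq bool) (i j : nat) : bool := nth false l (edge_index i j).

Lemma edge_index_lt i j n : i != j -> i < n -> j < n -> edge_index i j < 'C(n, 2).
Proof.
move=> ij i_lt j_lt; rewrite /edge_index.
apply: (@leq_trans 'C((maxn i j).+1, 2)).
  by rewrite binS bin1 ltn_add2l; lia.
by apply: leq_bin2l; rewrite gtn_max i_lt j_lt.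
Qed.

Lemma edgesS n : edges n.+1 = edges n ++ [seq (i, n) | i <- iota 0 n].
Proof. by rewrite /edges -addn1 iotaD map_cat flatten_cat /= cats0. Qed.

Lemma size_edges n : size (edges n) = 'C(n, 2).
Proof. by elim: n => // n IH; rewrite edgesS size_cat IH size_map size_iota binS bin1. Qed.

Lemma nth_edges i j n : i < j < n -> nth (0, 0) (edges n) (edge_index i j) = (i, j).
Proof.
elim: n => [|n IH] /andP [ij j_lt]; first by [].
rewrite edgesS nth_cat size_edges.
have [j_lt_n | j_ge_n] := ltnP j n.
  by rewrite edge_index_lt ?(ltn_eqF ij) ?(ltn_trans ij) // IH // ij.
have j_n : j = n by apply/eqP; rewrite eqn_leq j_ge_n -ltnS j_lt.
subst j.
rewrite /edge_index (maxn_idPr (ltnW ij)) (minn_idPl (ltnW ij)).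
by rewrite ltnNge leq_addr /= addKn (nth_map 0) ?size_iota // nth_iota.
Qed.

Lemma bits_coloring_of g n i j : (forall i j, g i j = g j i) ->
  i != j -> i < n -> j < n -> bits_coloring (coloring_bits g n) i j = g i j.
Proof.
move=> g_sym ij i_lt j_lt.
rewrite /bits_coloring (nth_map (0, 0)) ?size_edges ?edge_index_lt //.
case: ltngtP ij => // [i_j | j_i] _; first by rewrite nth_edges ?i_j.
by rewrite /edge_index maxnC minnC nth_edges ?j_i // g_sym.
Qed.

Lemma bits_coloring_take l k i j :
  edge_index i j < k -> bits_coloring (take k l) i j = bits_coloring l i j.
Proof. by move=> lt_k; rewrite /bits_coloring nth_take. Qed.

(* Memoizes a colouring, so that the search does not recompute [edge_index]. *)
Definition tabulate (g : nat -> nat -> bool) (N : nat) : seq (seq bool) :=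
  mkseq (fun i => mkseq (g i) N) N.

Definition table_coloring (t : seq (seq bool)) (i j : nat) : bool :=
  nth false (nth [::] t i) j.

Lemma table_coloringE g N i j : i < N -> j < N -> table_coloring (tabulate g N) i j = g i j.
Proof. by move=> i_lt j_lt; rewrite /table_coloring !nth_mkseq. Qed.

Fixpoint all_lists (n : nat) (P : seq bool -> bool) : bool :=
  if n is n'.+1 then
    all_lists n' (fun l => P (true :: l)) && all_lists n' (fun l => P (false :: l))
  else P [::].

Lemma all_listsP n P l : all_lists n P -> size l = n -> P l.
Proof.
elim: n P l => [|n IH] P [|b l] //= /andP [P_true P_false] [l_size].
by case: b; [apply: (IH (fun l => P (true :: l))) | apply: (IH (fun l => P (false :: l)))].
Qed.

Definition K4_star_hints : seq (pattern * seq bool) :=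
  [:: (K4, [:: false; true; true; true]);
      (K4e_pendant, [:: false; true]);
      (net, [:: false; true; true])].

Definition bits_search (l : seq bool) (N : nat) : bool :=
  family_searchb (table_coloring (tabulate (bits_coloring l) N)) N K4_star_hints.

Lemma bits_search_sound l N : bits_search l N ->
  exists H col s, List.In H K4_star /\ mono_embedding (bits_coloring l) N H col s.
Proof.
have hints_oriented : all (oriented \o fst) K4_star_hints by [].
move=> /(family_searchb_sound hints_oriented) [H [col [s [HF Hs]]]].
have H_or : oriented H by apply: In_all HF; rewrite all_map.
exists H, col, s; split => //; apply: mono_embedding_transfer Hs => //.
by move=> i j i_lt j_lt _; exact: table_coloringE.
Qed.

Definition K7_covered (l : seq bool) : bool :=
  if bits_search l 6 then true else all_lists 6 (fun l' => bits_search (l ++ l') 7).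

(* Only 280 of these colourings of K_6 have no monochromatic copy. *)
Lemma K7_covered_all : all_lists 14 (fun l => K7_covered (true :: l)).
Proof. vm_cast_no_check (erefl true). Qed.

Lemma bits_search_K7 l : size l = 21 -> head false l ->
  exists H col s, List.In H K4_star /\ mono_embedding (bits_coloring l) 7 H col s.
Proof.
move=> l_size l_head.
have: K7_covered (take 15 l).
  have -> : take 15 l = true :: behead (take 15 l) by case: l l_size l_head => //= b l _ ->.
  by apply: all_listsP K7_covered_all _; rewrite size_behead size_takel ?l_size.
rewrite /K7_covered; case: ifP => [/bits_search_sound [H [col [s [HF Hs]]]] _ | _].
  exists H, col, s; split => //; apply: mono_embedding_transfer Hs => //.
    by apply: In_all HF.
  move=> i j i_lt j_lt ij; apply: bits_coloring_take.
  exact: edge_index_lt ij i_lt j_lt.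
move=> /(@all_listsP _ _ (drop 15 l)); rewrite size_drop l_size cat_take_drop.
by move=> /(_ erefl) /bits_search_sound.
Qed.

Lemma arrows_7 : arrows 7 2 K4_star.
Proof.
move=> c c_sym; wlog c01 : c c_sym / nat_coloring c 0 1 => [main|].
  case c01: (nat_coloring c 0 1); first exact: main.
  have [|| H HF copy] := main (fun x y => rev_ord (c x y)).
  - by move=> x y; rewrite c_sym.
  - by rewrite nat_coloring_rev c01.
  by exists H => //; exact: has_mono_copy_recolor rev_ordK copy.
set g := nat_coloring c.
have g_sym i j : g i j = g j i by rewrite /g /nat_coloring c_sym.
have [||H [col [s [HF Hs]]]] := @bits_search_K7 (coloring_bits g 7).
- by rewrite size_map size_edges.
- exact: c01.
exists H => //; apply: mono_embedding_copy; apply: mono_embedding_transfer Hs => //.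
  by apply: In_all HF.
by move=> i j i_lt j_lt ij; exact: bits_coloring_of.
Qed.

Theorem lemma2 : ramsey_is K4_star 2 7.
Proof. split; [exact: arrows_7 | exact: not_arrows_lt7]. Qed.
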